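(* Let $q$ and $r$ be integers with $4\le q<r+3$. Then (a) $F_v(2_r;q-1)\ge F_v(2_r;q)+1$; (b) if $F_v(2_r;q)+1\ge R(q-1,3)$, then $F_v(2_r;q-1)\ge F_v(2_r;q)+2$.
   Context: All graphs are finite, simple and undirected. $\mathrm{cl}(G)$ is the clique number of $G$. $G\overset{v}{\to}(2_r)$ means that in every partition of $V(G)$ into $r$ pairwise disjoint parts some part contains an edge (equivalently $\chi(G)\ge r+1$). $H_v(2_r;q)$ is the set of graphs $G$ with $G\overset{v}{\to}(2_r)$ and $\mathrm{cl}(G)<q$; $F_v(2_r;q)=\min\{|V(G)|:G\in H_v(2_r;q)\}$. The Ramsey number $R(p,3)$ is the least $n$ such that every graph on at least $n$ vertices has a $p$-clique or an independent set of size $3$. *)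

From HB Require Import structures.
From mathcomp Require Import all_boot.
From Stdlib Require Import ClassicalEpsilon.
Set Implicit Arguments. Unset Strict Implicit. Unset Printing Implicit Defensive.

(* A finite simple graph: vertex set a finType T, edge relation e
   irreflexive and symmetric. |V(G)| = #|T|. *)
Definition simple_graph (T : finType) (e : rel T) : Prop :=
  irreflexive e /\ symmetric e.

Definition is_clique (T : finType) (e : rel T) (K : {set T}) : Prop :=
  forall x y, x \in K -> y \in K -> x != y -> e x y.
Definition is_indep (T : finType) (e : rel T) (I : {set T}) : Prop :=
  forall x y, x \in I -> y \in I -> ~~ e x y.

Definition clique_num_lt (T : finType) (e : rel T) (q : nat) : Prop :=
  forall K : {set T}, is_clique e K -> #|K| < q.

(* G -v-> (2_r): every partition of V(G) into r pairwise disjoint parts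
   (given by the part-index map c : T -> 'I_r) has a part containing an edge. *)
Definition varrows (T : finType) (e : rel T) (r : nat) : Prop :=
  forall c : T -> 'I_r, exists x y, e x y /\ c x = c y.

Definition in_Hv (r q : nat) (T : finType) (e : rel T) : Prop :=
  simple_graph e /\ varrows e r /\ clique_num_lt e q.

(* least natural number satisfying P (0 if none exists) *)
Definition decP (P : Prop) : bool :=
  if excluded_middle_informative P then true else false.

Definition classical_min (P : nat -> Prop) : nat :=
  match excluded_middle_informative (exists n, decP (P n)) with
  | left h => ex_minn h
  | right _ => 0
  end.

Definition Fv (r q : nat) : nat :=
  classical_min (fun n => exists (T : finType) (e : rel T),
                   #|T| = n /\ in_Hv r q e).

Definition ramsey_prop (p n : nat) : Prop :=
  forall (T : finType) (e : rel T), simple_graph e -> n <= #|T| ->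
    (exists K : {set T}, is_clique e K /\ #|K| = p) \/
    (exists I : {set T}, is_indep e I /\ #|I| = 3).

Definition Ramsey3 (p : nat) : nat := classical_min (ramsey_prop p).

From Pilot Require Import Defs.
From mathcomp Require Import all_boot.
From mathcomp Require Import zify.
From Stdlib Require Import Classical ClassicalEpsilon.

Set Implicit Arguments.
Unset Strict Implicit.
Unset Printing Implicit Defensive.

(* The key construction is the contraction of an independent set S of a graph
   G in H_v(2_r; p) to a single vertex: the result still has chromatic number
   > r (colour G through the contraction map), and every clique of the
   contracted graph loses at most the new vertex when pulled back to G, so it
   lies in H_v(2_r; p+1) and has |V(G)| - |S| + 1 vertices.  Applied to a
   minimum graph G of H_v(2_r; q-1) this gives
     F_v(2_r; q) + |S| <= F_v(2_r; q-1) + 1.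
   Part (a) uses |S| = 2: G is not complete, since a complete graph with
   fewer than q-1 <= r+1 vertices is r-colourable.  Part (b) uses |S| = 3:
   G has no (q-1)-clique and at least R(q-1,3) vertices.

   For the minima to be meaningful we show that H_v(2_r; p) is nonempty for
   p >= 3 (shift graphs are triangle-free with chromatic number > r), and
   that R(p, 3) is finite (the classical induction on p). *)

Section ClassicalMin.
Variable P : nat -> Prop.

Lemma decP_true (Q : Prop) : Defs.decP Q <-> Q.
Proof. by rewrite /Defs.decP; case: excluded_middle_informative. Qed.

Lemma classical_min_le m : P m -> classical_min P <= m.
Proof.
move=> Pm; rewrite /classical_min; case: excluded_middle_informative => // h.
by case: ex_minnP => k _; apply; apply/decP_true.
Qed.

Lemma classical_minP : (exists m, P m) -> P (classical_min P).
Proof.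
move=> [m Pm]; rewrite /classical_min; case: excluded_middle_informative.
  by move=> h; case: ex_minnP => k /decP_true.
by case; exists m; apply/decP_true.
Qed.

End ClassicalMin.

Lemma Fv_le r q (T : finType) (e : rel T) : in_Hv r q e -> Fv r q <= #|T|.
Proof. by move=> G; apply: classical_min_le; exists T, e. Qed.

Lemma Fv_attained r q :
  (exists (T : finType) (e : rel T), in_Hv r q e) ->
  exists (T : finType) (e : rel T), #|T| = Fv r q /\ in_Hv r q e.
Proof.
move=> [T [e G]]; apply: (@classical_minP (fun n =>
  exists (T : finType) (e : rel T), #|T| = n /\ in_Hv r q e)).
by exists #|T|, T, e.
Qed.

Lemma subset_of_card (T : finType) (A : {set T}) k :
  k <= #|A| -> exists2 B : {set T}, B \subset A & #|B| = k.
Proof.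
case/card_geqP => s [uniq_s size_s sA].
exists [set x in s]; first by apply/subsetP => x; rewrite inE; apply: sA.
by rewrite cardsE (card_uniqP uniq_s).
Qed.

Section CliquesIndependentSets.
Variables (T : finType) (e : rel T).
Hypotheses (irr : irreflexive e) (sym : symmetric e).

Lemma sub_clique (K K' : {set T}) :
  K' \subset K -> is_clique e K -> is_clique e K'.
Proof. by move=> /subsetP sK cK x y /sK xK /sK yK; apply: cK. Qed.

Lemma clique_setU1 v (K : {set T}) :
  v \notin K -> {in K, forall x, e v x} -> is_clique e K ->
  is_clique e (v |: K) /\ #|v |: K| = #|K|.+1.
Proof.
move=> vK adj_v cK; split; last by rewrite cardsU1 vK.
move=> x y /setU1P [->|xK] /setU1P [->|yK] //; rewrite ?eqxx // => xy.
- exact: adj_v.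
- by rewrite sym; apply: adj_v.
- exact: cK.
Qed.

Lemma indep_pair u w : ~~ e u w -> is_indep e [set u; w].
Proof.
by move=> nuw x y /set2P [] -> /set2P [] ->; rewrite ?irr // sym.
Qed.

Lemma indep_triple v x y :
  [/\ v != x, v != y & x != y] -> [/\ ~~ e v x, ~~ e v y & ~~ e x y] ->
  is_indep e [set v; x; y] /\ #|[set v; x; y]| = 3.
Proof.
move=> [vx vy xy] [nvx nvy nxy]; split.
  move=> a b; rewrite !inE -!orbA => /or3P [] /eqP -> /or3P [] /eqP ->;
  by rewrite ?irr // sym.
by rewrite -setUA cardsU1 cards2 xy !inE negb_or vx vy.
Qed.

Lemma clique_or_nonedge (A : {set T}) p : p <= #|A| ->
  (exists2 K : {set T}, K \subset A & is_clique e K /\ #|K| = p) \/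
  (exists x y, [/\ x \in A, y \in A, x != y & ~~ e x y]).
Proof.
move=> pA; have [nonedge|no_nonedge] := classic (exists x y,
  [/\ x \in A, y \in A, x != y & ~~ e x y]); first by right.
left; have [K KA cardK] := subset_of_card pA.
exists K => //; split => //; apply: sub_clique KA _ => x y xA yA xy.
by apply/negPn/negP => nexy; apply: no_nonedge; exists x, y.
Qed.

End CliquesIndependentSets.

(* Finiteness of R(p, 3), relativised to a vertex set A so that it can be
   proved by induction on p: pick v in A; if v has many neighbours in A,
   induct there and add v to the clique; otherwise v has more than p
   non-neighbours, which form a (p+1)-clique or contain a non-edge, which
   together with v is an independent triple. *)
Lemma ramsey_bound_set p : exists N, forall (T : finType) (e : rel T),
  simple_graph e -> forall A : {set T}, N <= #|A| ->
  (exists2 K : {set T}, K \subset A & is_clique e K /\ #|K| = p) \/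
  (exists2 I : {set T}, I \subset A & is_indep e I /\ #|I| = 3).
Proof.
elim: p => [|p [N IH]].
  by exists 0 => T e _ A _; left; exists set0; rewrite ?sub0set ?cards0 //;
    split => // x y; rewrite inE.
exists (N + p).+1 => T e [irr sym] A cardA.
have [v vA] : exists v, v \in A by apply/card_gt0P; apply: leq_trans cardA.
pose Nbr := [set x | e v x].
pose Nv := (A :\ v) :&: Nbr; pose Mv := (A :\ v) :\: Nbr.
have NvA : Nv \subset A by apply: subset_trans (subsetIl _ _) (subD1set A v).
have MvA : Mv \subset A by apply: subset_trans (subsetDl _ _) (subD1set A v).
have card_split : #|Nv| + #|Mv| = #|A| - 1.
  by rewrite cardsID (cardsD1 v A) vA; lia.
have [bigN|smallN] := leqP N #|Nv|.
  case: (IH T e (conj irr sym) Nv bigN) => [[K KN [cK cardK]]|[I IN iI]].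
    have vK : v \notin K by apply/negP => /(subsetP KN); rewrite !inE eqxx.
    have adj_v : {in K, forall x, e v x}.
      by move=> x /(subsetP KN); rewrite !inE => /andP [].
    have [cvK cardvK] := clique_setU1 sym vK adj_v cK.
    left; exists (v |: K); last by rewrite cardvK cardK.
    by rewrite subUset sub1set vA (subset_trans KN).
  by right; exists I => //; apply: subset_trans NvA.
have Mv_nonadj x : x \in Mv -> v != x /\ ~~ e v x.
  by rewrite !inE => /and3P [nvx xv _]; rewrite eq_sym.
have bigM : p.+1 <= #|Mv| by lia.
case: (clique_or_nonedge e bigM) => [[K KM cK]|[x [y [xM yM xy nxy]]]].
  by left; exists K => //; apply: subset_trans MvA.
have [[vx nvx] [vy nvy]] := (Mv_nonadj x xM, Mv_nonadj y yM).
right; exists [set v; x; y]; last exact: indep_triple.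
by rewrite !subUset !sub1set vA !(subsetP MvA).
Qed.

Lemma Ramsey3P p : ramsey_prop p (Ramsey3 p).
Proof.
apply: classical_minP; have [N HN] := ramsey_bound_set p.
exists N => T e simple_e cardT.
case: (HN T e simple_e [set: T]); rewrite ?cardsT //.
  by move=> [K _ HK]; left; exists K.
by move=> [I _ HI]; right; exists I.
Qed.

(* The shift graph on the pairs i < j of 'I_n: (i,j) ~ (j,k). *)
Definition shift_rel (n : nat) : rel ('I_n * 'I_n) := fun x y =>
  [&& x.1 < x.2, y.1 < y.2 & (x.2 == y.1 :> nat) || (y.2 == x.1 :> nat)].
Arguments shift_rel : clear implicits.

Lemma shift_simple n : simple_graph (shift_rel n).
Proof.
split; first by move=> [i j]; rewrite /shift_rel /= orbb; case: ltngtP.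
by move=> x y; rewrite /shift_rel andbCA orbC.
Qed.

(* Shift graphs are triangle-free: a triangle would give i < j < k < i. *)
Lemma shift_triangle_free n : clique_num_lt (shift_rel n) 3.
Proof.
move=> K cK; rewrite ltnNge; apply/negP => /card_gt2P.
move=> [x [y [z [[xK yK zK] [xy yz zx]]]]].
have := cK _ _ xK yK xy; have := cK _ _ yK zK yz; have := cK _ _ zK xK zx.
by rewrite /shift_rel => /and3P [? ? /orP [] /eqP ?] /and3P [? ? /orP [] /eqP ?]
  /and3P [? ? /orP [] /eqP ?]; lia.
Qed.

(* The shift graph on more than 2^r points is not r-colourable: for a proper
   colouring c, the map i |-> { c(i,j) | j > i } into subsets of colours is
   injective, since c(i,j) belongs to the set of j only if some c(j,k)
   equals c(i,j), making (i,j) ~ (j,k) monochromatic. *)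
Lemma shift_varrows r n : 2 ^ r < n -> varrows (shift_rel n) r.
Proof.
move=> big_n c; apply: NNPP => proper_c.
pose S (i : 'I_n) : {set 'I_r} := [set c (i, j) | j in [set j : 'I_n | i < j]].
have S_neq (i j : 'I_n) : i < j -> S i != S j.
  move=> ij; apply/eqP => Sij.
  have : c (i, j) \in S j by rewrite -Sij; apply: imset_f; rewrite inE.
  case/imsetP => k; rewrite inE => jk cijk; apply: proper_c.
  by exists (i, j), (j, k); rewrite /shift_rel /= ij jk eqxx.
have S_inj : injective S.
  move=> i j Sij; case: (ltngtP i j) => [ij|ji|/val_inj //].
  - by move: (S_neq _ _ ij); rewrite Sij eqxx.
  - by move: (S_neq _ _ ji); rewrite Sij eqxx.
have := leq_card S S_inj.
rewrite card_ord -cardsT -powersetT card_powerset cardsT card_ord.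
by rewrite leqNgt big_n.
Qed.

Lemma Hv_nonempty r p : 3 <= p -> exists (T : finType) (e : rel T), in_Hv r p e.
Proof.
move=> p3; exists ('I_(2 ^ r).+1 * 'I_(2 ^ r).+1)%type, (shift_rel _).
split; first exact: shift_simple.
split; first exact: shift_varrows.
by move=> K cK; apply: leq_trans (shift_triangle_free cK) p3.
Qed.

(* A graph of H_v(2_r; p) with p <= r + 1 is not complete: otherwise it has
   fewer than p <= r + 1 vertices, and colouring each vertex differently is a
   proper r-colouring. *)
Lemma Hv_nonedge r p (T : finType) (e : rel T) :
  in_Hv r p e -> p <= r.+1 -> exists u w, u != w /\ ~~ e u w.
Proof.
move=> [[irr _] [arrows cl]] pr.
have [[K _ [cK card_K]]|[x [y [_ _ xy nxy]]]] :=
  clique_or_nonedge e (leqnn #|[set: T]|); last by exists x, y.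
have small_T : #|T| <= r by rewrite -ltnS -cardsT -card_K (leq_trans (cl _ cK)).
have [x [y [exy cxy]]] := arrows (fun x => widen_ord small_T (enum_rank x)).
have xy : x = y by apply/enum_rank_inj/val_inj; apply: (congr1 val cxy).
by rewrite xy irr in exy.
Qed.

Section Contraction.
Variables (T : finType) (e : rel T) (S : {set T}) (u : T).
Hypotheses (irr : irreflexive e) (sym : symmetric e).
Hypotheses (uS : u \in S) (indepS : is_indep e S).

(* The contraction map sends every vertex of S to u and fixes the others; its
   image, the vertex set of the contracted graph, is V(G) minus S \ {u}. *)
Definition contract_vertex (a : T) : T := if a \in S then u else a.

Definition contract_set : {set T} := ~: (S :\ u).

Lemma contract_vertexP a : contract_vertex a \in contract_set.
Proof.
by rewrite /contract_vertex !inE; case: ifP => aS; rewrite ?eqxx ?aS ?andbF.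
Qed.

Definition contracted : finType := {x : T | x \in contract_set}.

Definition contract (a : T) : contracted :=
  exist (fun x => x \in contract_set) _ (contract_vertexP a).

Definition contract_rel : rel contracted := fun x y =>
  (val x != val y) &&
  [exists a, exists b, [&& contract_vertex a == val x,
                           contract_vertex b == val y & e a b]].

Lemma card_contracted : #|contracted| + #|S| = #|T| + 1.
Proof.
have -> : #|contracted| = #|~: (S :\ u)| by rewrite card_sig.
by have := cardsC (S :\ u); have := cardsD1 u S; rewrite uS; lia.
Qed.

Lemma contract_simple : simple_graph contract_rel.
Proof.
split; first by move=> x; rewrite /contract_rel eqxx.
suff sym_c x y : contract_rel x y -> contract_rel y x.
  by move=> x y; apply/idP/idP; apply: sym_c.
move=> /andP [xy /existsP [a /existsP [b /and3P [ax b_y eab]]]].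
rewrite /contract_rel eq_sym xy; apply/existsP; exists b; apply/existsP.
by exists a; rewrite ax b_y sym.
Qed.

(* An edge of G is never collapsed, since S is independent. *)
Lemma contract_edge a b : e a b -> contract_rel (contract a) (contract b).
Proof.
move=> eab; apply/andP; split; last first.
  by apply/existsP; exists a; apply/existsP; exists b; rewrite !eqxx eab.
rewrite /= /contract_vertex.
case: (boolP (a \in S)) => aS; case: (boolP (b \in S)) => bS.
- by have := indepS aS bS; rewrite eab.
- by apply: contraNneq bS => <-.
- by apply: contraNneq aS => ->.
- by apply: contraTneq eab => ->; rewrite irr.
Qed.

Lemma contract_varrows r : varrows e r -> varrows contract_rel r.
Proof.
move=> arrows c; have [a [b [eab cab]]] := arrows (c \o contract).
by exists (contract a), (contract b); split; first exact: contract_edge.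
Qed.

(* A clique of the contracted graph minus u is a clique of G. *)
Lemma contract_clique p : clique_num_lt e p -> clique_num_lt contract_rel p.+1.
Proof.
move=> cl K cK; pose Kt := [set val x | x in K].
have pullback x : x \in S -> contract_vertex x = u by rewrite /contract_vertex => ->.
have fixed x : x \notin S -> contract_vertex x = x.
  by rewrite /contract_vertex => /negbTE ->.
have cKt : is_clique e (Kt :\ u).
  move=> a b /setD1P [au /imsetP [X XK aX]] /setD1P [bu /imsetP [Y YK bY]] ab.
  subst a b.
  have XY : X != Y by apply: contraNneq ab => ->.
  case/andP: (cK X Y XK YK XY) => _ /existsP [a0 /existsP [b0]].
  case/and3P => /eqP a0X /eqP b0Y ea0b0.
  have a0S : a0 \notin S by apply: contraNN au => a0S; rewrite -a0X pullback.
  have b0S : b0 \notin S by apply: contraNN bu => b0S; rewrite -b0Y pullback.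
  by rewrite -a0X -b0Y !fixed.
have := cl _ cKt; rewrite -(card_imset _ val_inj) (cardsD1 u Kt).
by case: (u \in Kt) => /=; lia.
Qed.

Lemma contract_Hv r p : in_Hv r p e -> in_Hv r p.+1 contract_rel.
Proof.
move=> [_ [arrows cl]]; split; first exact: contract_simple.
by split; [apply: contract_varrows | apply: contract_clique].
Qed.

End Contraction.

Lemma Fv_contract r p (T : finType) (e : rel T) (S : {set T}) u :
  in_Hv r p e -> u \in S -> is_indep e S -> Fv r p.+1 + #|S| <= #|T| + 1.
Proof.
move=> G uS indepS; have [[irr sym] _] := G.
rewrite -(card_contracted uS) leq_add2r.
exact/Fv_le/(contract_Hv irr sym uS indepS).
Qed.

Theorem corollary2p1 (q r : nat) (hq : 4 <= q) (hqr : q < r + 3) :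
  Fv r q.-1 >= (Fv r q).+1 /\
  ((Fv r q).+1 >= Ramsey3 q.-1 -> Fv r q.-1 >= (Fv r q).+2).
Proof.
have q_pred : q.-1.+1 = q by rewrite prednK //; lia.
have [q1_ge3 q1_le_r1] : 3 <= q.-1 /\ q.-1 <= r.+1 by lia.
have [T [e [card_T G]]] := Fv_attained (Hv_nonempty r q1_ge3).
have [[irr sym] [_ cl]] := G.
have bound (S : {set T}) u : u \in S -> is_indep e S -> Fv r q + #|S| <= Fv r q.-1 + 1.
  by rewrite -card_T -{1}q_pred; apply: Fv_contract.
have [u [w [uw nuw]]] := Hv_nonedge G q1_le_r1.
have partA : (Fv r q).+1 <= Fv r q.-1.
  have := bound _ _ (set21 u w) (indep_pair irr sym nuw).
  by rewrite cards2 uw; lia.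
split => // big_F.
have big_T : Ramsey3 q.-1 <= #|T| by rewrite card_T (leq_trans big_F).
case: (Ramsey3P (proj1 G) big_T) => [[K [cK cardK]]|[I [indepI cardI]]].
  by have := cl K cK; rewrite cardK ltnn.
have [v vI] : exists v, v \in I by apply/card_gt0P; rewrite cardI.
by have := bound I v vI indepI; rewrite cardI; lia.
Qed.
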